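(* Let $\delta\ge 2$, $n\ge 7\delta-7$ and $s$ be integers with $\delta+1\le s\le n/2$. Then $$\rho_Q\big(K_s\vee(K_{n-2s+1}\cup(s-1)K_1)\big)\ <\ \rho_Q\big(K_\delta\vee(K_{n-2\delta+1}\cup(\delta-1)K_1)\big).$$
   Context: $Q(G)=A(G)+D(G)$ is the signless Laplacian matrix (adjacency matrix plus diagonal degree matrix) and $\rho_Q(G)$ its largest eigenvalue. $K_m$ is the complete graph on $m$ vertices, $tK_1$ the edgeless graph on $t$ vertices, $\cup$ disjoint union, and $G_1\vee G_2$ the join (disjoint union plus all edges between $V(G_1)$ and $V(G_2)$). *)

From HB Require Import structures.
From mathcomp Require Import all_boot all_order all_algebra.
From mathcomp Require Import boolp classical_sets reals.
Set Implicit Arguments. Unset Strict Implicit. Unset Printing Implicit Defensive.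
Import Order.TTheory GRing.Theory Num.Theory.
Local Open Scope ring_scope.

(* A simple graph on the vertex set 'I_n is given by a relation e
   (assumed symmetric and irreflexive where relevant). *)

Definition adj_mx (R : realType) (n : nat) (e : rel 'I_n) : 'M[R]_n :=
  \matrix_(i, j) (e i j)%:R.

Definition deg (n : nat) (e : rel 'I_n) (i : 'I_n) : nat := #|[set j | e i j]|.

Definition signless_lap (R : realType) (n : nat) (e : rel 'I_n) : 'M[R]_n :=
  adj_mx R e + diag_mx (\row_i ((deg e i)%:R : R)).

(* rho_Q(G): the largest eigenvalue of Q(G) (the supremum of the finite,
   nonempty set of real eigenvalues of the real symmetric matrix Q(G)). *)
Definition rhoQ (R : realType) (n : nat) (e : rel 'I_n) : R :=
  sup [set a : R | eigenvalue (signless_lap R e) a].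

(* The graph K_s \vee (K_{n-2s+1} \cup (s-1)K_1) on vertices 0..n-1:
   vertices 0..s-1 form K_s, vertices s..n-s form K_{n-2s+1},
   vertices n-s+1..n-1 are the s-1 isolated vertices of (s-1)K_1;
   the join adds all edges between {0..s-1} and the rest. *)
Definition join_graph (n s : nat) : rel 'I_n :=
  fun i j => (i != j) &&
    [|| (i < s)%N, (j < s)%N | ((i < n - s + 1)%N && (j < n - s + 1)%N)].
Arguments join_graph : clear implicits.

(* Write G_s = K_s \/ (K_{n-2s+1} \u (s-1)K_1) and T_s for the characteristic
   polynomial of the quotient matrix of Q(G_s) for the equitable partition into
   K_s, K_{n-2s+1} and the isolated vertices.  The largest root r of T_delta,
   which exceeds 2n - 2 delta, is an eigenvalue of Q(G_delta) with a positive
   eigenvector constant on the three classes.  Since T_s(r) (r - delta) equals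
   a polynomial with an explicit positivity certificate plus T_delta(r) (r - s),
   we get T_s(r) > 0; this makes a suitable positive class-constant vector a
   strict sub-eigenvector of Q(G_s) for r, so by a Collatz-Wielandt argument
   every eigenvalue of Q(G_s) is at most r - eps for some eps > 0. *)

From HB Require Import structures.
From mathcomp Require Import all_boot all_order all_algebra.
From mathcomp Require Import boolp classical_sets reals.
From mathcomp Require Import ring lra zify.
Set Implicit Arguments. Unset Strict Implicit. Unset Printing Implicit Defensive.
Import Order.TTheory GRing.Theory Num.Theory.
Local Open Scope ring_scope.

Section CollatzWielandt.
Variables (R : realFieldType) (n : nat) (M : 'M[R]_n).
Hypothesis M_ge0 : forall i j, 0 <= M i j.

Lemma eigenvalue_le_weighted_colsum (w : 'I_n -> R) (U a : R) :
  (forall i, 0 < w i) -> (forall j, \sum_i w i * M i j <= U * w j) ->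
  eigenvalue M a -> a <= U.
Proof.
move=> w_gt0 hU /eigenvalueP [v vM /matrix0Pn [i0 [j0 v_j0]]].
rewrite [i0]ord1 in v_j0.
(* Compare a and U at a vertex x maximising |v_x| / w_x. *)
pose f j := `|v 0 j| / w j.
have [x _ f_max] := @arg_maxP _ _ _ j0 predT f isT.
have fx_gt0 : 0 < f x.
  by apply: lt_le_trans (f_max j0 isT); rewrite divr_gt0 ?normr_gt0.
have vx_gt0 : 0 < `|v 0 x| by move: fx_gt0; rewrite pmulr_lgt0 ?invr_gt0.
have av : a * v 0 x = \sum_i v 0 i * M i x.
  by have := congr1 (fun m : 'rV[R]_n => m 0 x) vM; rewrite !mxE.
have : `|a| * `|v 0 x| <= U * `|v 0 x|.
  rewrite -normrM av; apply: le_trans (ler_norm_sum _ _ _) _.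
  apply: le_trans (_ : f x * \sum_i w i * M i x <= _).
    rewrite mulr_sumr; apply: ler_sum => i _.
    rewrite normrM (ger0_norm (M_ge0 _ _)) mulrA ler_wpM2r //.
    by rewrite -ler_pdivrMr //; apply: f_max.
  apply: le_trans (ler_wpM2l (ltW fx_gt0) (hU x)) _.
  by rewrite mulrCA divfK ?gt_eqF.
by rewrite ler_pM2r //; apply: le_trans; apply: ler_norm.
Qed.

Lemma eigenvalue_le_sum_entries a : eigenvalue M a -> a <= \sum_i \sum_j M i j.
Proof.
apply: (@eigenvalue_le_weighted_colsum (fun=> 1)) => // j.
rewrite mulr1; apply: ler_sum => i _.
by rewrite mul1r (bigD1 j) //= lerDl sumr_ge0.
Qed.

Lemma eigenvalue_le_sub_slack (w : 'I_n -> R) (U : R) :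
  (forall i, 0 < w i) -> (forall j, \sum_i w i * M i j < U * w j) ->
  exists2 eps, 0 < eps & forall a, eigenvalue M a -> a <= U - eps.
Proof.
move=> w_gt0 hU.
have [j0|n0] := pickP (@predT 'I_n); last first.
  exists 1 => // a /eigenvalueP[v _ /matrix0Pn[_ [j _]]].
  by have := n0 j.
pose slack j := U - (\sum_i w i * M i j) / w j.
have [x _ slack_min] := @arg_minP _ _ _ j0 predT slack isT.
exists (slack x).
  by rewrite subr_gt0 ltr_pdivrMr.
move=> a; apply: (eigenvalue_le_weighted_colsum (w := w)) => // j.
rewrite -ler_pdivrMr //; have := slack_min j isT; rewrite /slack; lra.
Qed.

End CollatzWielandt.

Lemma signless_lap_ge0 (R : realType) n (e : rel 'I_n) i j :
  0 <= signless_lap R e i j.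
Proof. by rewrite !mxE addr_ge0 ?mulrn_wge0. Qed.

Lemma rhoQ_ge_eigenvalue (R : realType) n (e : rel 'I_n) a :
  eigenvalue (signless_lap R e) a -> a <= rhoQ R e.
Proof.
apply: ub_le_sup; exists (\sum_i \sum_j signless_lap R e i j) => b.
exact/eigenvalue_le_sum_entries/signless_lap_ge0.
Qed.

(* Mind the junk value: a matrix without real eigenvalues has rhoQ = sup set0 = 0. *)
Lemma rhoQ_le (R : realType) n (e : rel 'I_n) u :
  (forall a, eigenvalue (signless_lap R e) a -> a <= u) -> rhoQ R e <= Num.max u 0.
Proof.
move=> hu; rewrite /rhoQ.
have [[a ha]|no_eig] := pselect (exists a, eigenvalue (signless_lap R e) a).
  by apply: ge_sup; [exists a | move=> b /hu bu; rewrite le_max bu].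
set E := (X in sup X).
have -> : E = set0 by apply/seteqP; split => // b hb; apply: no_eig; exists b.
by rewrite sup0 le_max lexx orbT.
Qed.

Definition class_vec (R : realType) (n s : nat) (al be ga : R) (k : nat) : R :=
  if (k < s)%N then al else if (k < n - s + 1)%N then be else ga.

Lemma join_graph_sym n s : symmetric (join_graph n s).
Proof.
move=> i j; rewrite /join_graph eq_sym; congr (_ && _).
by case: (i < s)%N; case: (j < s)%N => //=; rewrite andbC.
Qed.

Section JoinGraphColumnSums.
Variables (R : realType) (n s : nat).
Hypotheses (s_gt0 : (0 < s)%N) (s_le : (2 * s <= n + 1)%N).
Local Notation L := (n - s + 1)%N.
Local Notation N := (n%:R : R).
Local Notation S := (s%:R : R).

Lemma sum_class_vec (al be ga : R) (F : nat -> R) :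
  \sum_(i < n) class_vec n s al be ga i * F i =
  al * \sum_(0 <= k < s) F k + be * \sum_(s <= k < L) F k
  + ga * \sum_(L <= k < n) F k.
Proof.
rewrite -(big_mkord xpredT (fun k => class_vec n s al be ga k * F k)).
have sL : (s <= L)%N by lia.
have Ln : (L <= n)%N by lia.
rewrite (@big_cat_nat _ _ _ L 0 n) // (@big_cat_nat _ _ _ s 0 L) //=.
rewrite !mulr_sumr; congr (_ + _ + _); apply: eq_big_nat => k /andP[k1 k2];
  rewrite /class_vec ?k2 //; first by rewrite ltnNge k1.
by rewrite ltnNge (leq_trans _ k1) ?ltnNge ?k1 //; lia.
Qed.

Lemma class_sizesE : (L - s)%:R = N - 2 * S + 1 /\ (n - L)%:R = S - 1.
Proof.
have -> : (L - s = n + 1 - 2 * s)%N by lia.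
have -> : (n - L = s - 1)%N by lia.
by rewrite !natrB // natrD natrM addrAC.
Qed.

(* [h] is [join_graph n s] without the irreflexivity condition [i != j]; it is
   constant on each vertex class, and the diagonal term is subtracted. *)
Lemma join_adj_colsum (al be ga : R) (j : 'I_n) :
  \sum_(i < n) class_vec n s al be ga i * (join_graph n s i j)%:R =
  if (j < s)%N then al * (S - 1) + be * (N - 2 * S + 1) + ga * (S - 1)
  else if (j < L)%N then al * S + be * (N - 2 * S)
  else al * S.
Proof.
pose h k := [|| (k < s)%N, (j < s)%N | (k < L)%N && (j < L)%N].
have -> : \sum_(i < n) class_vec n s al be ga i * (join_graph n s i j)%:R =
    \sum_(i < n) class_vec n s al be ga i * (h i)%:R - class_vec n s al be ga j * (h j)%:R.
  rewrite (bigD1 j) //= [X in _ = X - _](bigD1 j) //= /join_graph eqxx mulr0 add0r.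
  by rewrite addrAC subrr add0r; apply: eq_bigr => i /negPf ->.
rewrite (sum_class_vec _ _ _ (fun k => (h k)%:R)).
rewrite (@eq_big_nat _ _ _ 0 s _ (fun=> 1)); last by move=> k /andP[_ hk]; rewrite /h hk.
rewrite (@eq_big_nat _ _ _ s L _ (fun=> (j < L)%N%:R)); last first.
  move=> k /andP[k1 k2]; rewrite /h ltnNge k1 k2 /=.
  by case: ltnP => //= js; rewrite (_ : (j < L)%N) //; lia.
rewrite (@eq_big_nat _ _ _ L n _ (fun=> (j < s)%N%:R)); last first.
  move=> k /andP[k1 _].
  have [ks kL] : (k < s)%N = false /\ (k < L)%N = false by split; apply/negbTE; lia.
  by rewrite /h ks kL /= orbF.
have [eLs enL] := class_sizesE.
rewrite !sumr_const_nat subn0 -[_ *+ (L - s)]mulr_natr -[_ *+ (n - L)]mulr_natr.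
rewrite eLs enL /h /class_vec.
have jsL : (j < s)%N -> (j < L)%N by lia.
move: N S => x y; case: (ltnP j s) => js /=; first by rewrite jsL //=; ring.
by case: (ltnP j L) => jL /=; ring.
Qed.

Lemma deg_join_graph (j : 'I_n) :
  (deg (join_graph n s) j)%:R =
  if (j < s)%N then N - 1 else if (j < L)%N then N - S else S :> R.
Proof.
have -> : (deg (join_graph n s) j)%:R =
    \sum_(i < n) class_vec n s 1 1 1 i * (join_graph n s i j)%:R :> R.
  rewrite /deg -sum1_card natr_sum big_mkcond /=; apply: eq_bigr => i _.
  have -> : class_vec n s 1 1 1 i = 1 :> R by rewrite /class_vec !if_same.
  by rewrite inE join_graph_sym mul1r; case: (join_graph n s i j).
rewrite join_adj_colsum; move: N S => x y.
by case: ifP => _; [|case: ifP => _]; ring.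
Qed.

Lemma join_lap_colsum (al be ga : R) (j : 'I_n) :
  \sum_(i < n) class_vec n s al be ga i * signless_lap R (join_graph n s) i j =
  if (j < s)%N then al * (N + S - 2) + be * (N - 2 * S + 1) + ga * (S - 1)
  else if (j < L)%N then al * S + be * (2 * N - 3 * S)
  else al * S + ga * S.
Proof.
have -> : \sum_(i < n) class_vec n s al be ga i * signless_lap R (join_graph n s) i j =
    \sum_(i < n) class_vec n s al be ga i * (join_graph n s i j)%:R
    + class_vec n s al be ga j * (deg (join_graph n s) j)%:R.
  under eq_bigr => i _ do rewrite !mxE mulrDr.
  rewrite big_split /=; congr (_ + _).
  rewrite (bigD1 j) //= eqxx mulr1n big1 ?addr0 // => i /negPf ->.
  by rewrite mulr0n mulr0.
rewrite join_adj_colsum deg_join_graph /class_vec; move: N S => x y.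
by case: ifP => _; [|case: ifP => _]; ring.
Qed.
End JoinGraphColumnSums.

Section QuotientPolynomial.
Variable R : realFieldType.

(* det (r - B) for the quotient matrix B of Q(G_s), with N = n and S = s. *)
Definition quot_charpoly (N S r : R) : R :=
  (r - N - S + 2) * (r - 2 * N + 3 * S) * (r - S)
  - S * (N - 2 * S + 1) * (r - S) - S * (S - 1) * (r - 2 * N + 3 * S).

(* The difference that decides the sign of T_s(r) at a root r of T_delta,
   written in variables that are nonnegative under the hypotheses. *)
Definition comparison_poly (a b e c : R) : R :=
  let D := 2 + a in let S := D + 1 + b in let N := 7 * D - 7 + e in
  let r := 2 * N - 2 * D + c in
  quot_charpoly N S r * (r - D) - quot_charpoly N D r * (r - S).

Lemma quot_charpoly_comparison (N S D r : R) :
  quot_charpoly N S r * (r - D) =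
  comparison_poly (D - 2) (S - D - 1) (N - 7 * D + 7) (r - 2 * N + 2 * D)
  + quot_charpoly N D r * (r - S).
Proof. rewrite /comparison_poly /= /quot_charpoly; ring. Qed.

(* The [cert] polynomials have nonnegative coefficients and W - 2 b = n - 2 s,
   so the right-hand side below is manifestly positive. *)
Definition cert0 (a e c : R) : R := 240*e + 84*e^+2 + 8*e^+3 + 142*c + 106*c*e + 16*c*e^+2 + 32*c^+2 + 10*c^+2*e + 2*c^+3 + 960*a + 788*a*e + 120*a*e^+2 + 496*a*c + 160*a*c*e + 50*a*c^+2 + 1748*a^+2 + 584*a^+2*e + 390*a^+2*c + 912*a^+3.
Definition cert1 (a e c : R) : R := 390*e + 298*e^+2 + 74*e^+3 + 6*e^+4 + 629*c*e + 193*c*e^+2 + 19*c*e^+3 + 180*c^+2 + 108*c^+2*e + 16*c^+2*e^+2 + 12*c^+3 + 4*c^+3*e + 273*a + 1821*a*e + 859*a*e^+2 + 103*a*e^+3 + 2911*a*c + 1822*a*c*e + 275*a*c*e^+2 + 540*a*c^+2 + 160*a*c^+2*e + 20*a*c^+3 + 1085*a^+2 + 2736*a^+2*e + 607*a^+2*e^+2 + 4225*a^+2*c + 1305*a^+2*c*e + 400*a^+2*c^+2 + 1407*a^+3 + 1329*a^+3*e + 2025*a^+3*c + 595*a^+4.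
Definition cert2 (a e c : R) : R := 256 + 96*e + 8*e^+2 + 64*c + 12*c*e + 4*c^+2 + 560*a + 96*a*e + 70*a*c + 286*a^+2.
Definition cert3 (a e c : R) : R := 16 + 4*e + 2*c + 22*a.

Lemma comparison_poly_certificate (a b e c : R) :
  let W := 5 * a + 1 + e in
  4 * W * comparison_poly a b e c =
  4 * (W - 2 * b) * (124 + cert0 a e c) + 2 * b * (663 * c + cert1 a e c)
  + W * b * (W - 2 * b) * (2 * cert2 a e c + cert3 a e c * (W + 2 * b)).
Proof. rewrite /comparison_poly /quot_charpoly /cert0 /cert1 /cert2 /cert3 /=; ring. Qed.

Lemma comparison_poly_gt0 (a b e c : R) :
  0 <= a -> 0 <= b -> 0 <= e -> 0 < c -> 2 * b <= 5 * a + 1 + e ->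
  0 < comparison_poly a b e c.
Proof.
move=> a_ge0 b_ge0 e_ge0 c_gt0 hb; have c_ge0 := ltW c_gt0.
have [c0 c1 c2 c3] : [/\ 0 <= cert0 a e c, 0 <= cert1 a e c,
    0 <= cert2 a e c & 0 <= cert3 a e c].
  by rewrite /cert0 /cert1 /cert2 /cert3; split;
    repeat first [exact: ler0n | assumption | apply: addr_ge0 | apply: mulr_ge0 | apply: exprn_ge0].
have := comparison_poly_certificate a b e c; rewrite /=.
move: (cert0 a e c) (cert1 a e c) (cert2 a e c) (cert3 a e c) c0 c1 c2 c3 => x0 x1 x2 x3 c0 c1 c2 c3.
have W_gt0 : 0 < 5 * a + 1 + e by lra.
move: (5 * a + 1 + e) hb W_gt0 => W hb W_gt0 cert.
have last_ge0 : 0 <= W * b * (W - 2 * b) * (2 * x2 + x3 * (W + 2 * b)).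
  apply: mulr_ge0; first (apply: mulr_ge0; first apply: mulr_ge0); try lra.
  by apply: addr_ge0; [lra | apply: mulr_ge0; lra].
have : 0 < 4 * W * comparison_poly a b e c.
  rewrite cert; have [->|b_neq0] := eqVneq b 0.
    by rewrite !(mulr0, mul0r, addr0, subr0); apply: mulr_gt0; [apply: mulr_gt0 | lra].
  have b_gt0 : 0 < b by rewrite lt_def b_neq0.
  have : 0 < 2 * b * (663 * c + x1) by apply: mulr_gt0; lra.
  have : 0 <= 4 * (W - 2 * b) * (124 + x0) by apply: mulr_ge0; lra.
  lra.
by rewrite pmulr_rgt0 // mulr_gt0.
Qed.

Lemma quot_charpoly_gt0 (N S D r : R) :
  2 <= D -> 7 * D - 7 <= N -> D + 1 <= S -> 2 * S <= N -> 2 * N - 2 * D < r ->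
  quot_charpoly N D r = 0 -> 0 < quot_charpoly N S r.
Proof.
move=> D_ge2 N_ge S_ge S_le r_gt rootD.
have r_gt_D : 0 < r - D by lra.
rewrite -(pmulr_lgt0 _ r_gt_D) quot_charpoly_comparison rootD mul0r addr0.
by apply: comparison_poly_gt0; lra.
Qed.
End QuotientPolynomial.

Lemma quot_charpoly_root (R : rcfType) (N D : R) : 1 < D -> 2 * D <= N ->
  exists2 r, 2 * N - 2 * D < r & quot_charpoly N D r = 0.
Proof.
move=> D_gt1 N_ge.
pose p : {poly R} := ('X - (N + D - 2)%:P) * ('X - (2 * N - 3 * D)%:P) * ('X - D%:P)
  - (D * (N - 2 * D + 1))%:P * ('X - D%:P) - (D * (D - 1))%:P * ('X - (2 * N - 3 * D)%:P).
have pE x : p.[x] = quot_charpoly N D x.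
  by rewrite /p !hornerE /quot_charpoly; ring.
have p_lo : p.[2 * N - 2 * D] < 0.
  rewrite pE (_ : quot_charpoly _ _ _ = - (D * (D - 1) * (2 * N - 2 * D))).
    by rewrite oppr_lt0 !mulr_gt0 //; lra.
  by rewrite /quot_charpoly; ring.
have p_hi : 0 < p.[2 * N].
  rewrite pE (_ : quot_charpoly _ _ _ =
      D * ((2 * N - D) * (2 * N - D + 5) - 3 * D * (D - 1))).
    by apply: mulr_gt0; [lra | nra].
  by rewrite /quot_charpoly; ring.
have [r /andP[r_ge _] root_r] : exists2 r, 2 * N - 2 * D <= r <= 2 * N & root p r.
  by apply: poly_ivt; [lra | rewrite !ltW].
exists r; last by move: root_r; rewrite /root pE => /eqP.
rewrite lt_neqAle r_ge andbT; apply: contraTneq root_r => <-.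
by rewrite /root lt_eqF.
Qed.

Lemma join_lap_eigenvalue (R : realType) n d (r : R) :
  (0 < d)%N -> (2 * d <= n)%N -> 2 * n%:R - 2 * d%:R < r ->
  quot_charpoly n%:R d%:R r = 0 ->
  eigenvalue (signless_lap R (join_graph n d)) r.
Proof.
move=> d_gt0 d_le r_gt rootD.
have D_ge1 : (1 : R) <= d%:R by rewrite ler1n.
have N_ge : 2 * (d%:R : R) <= n%:R by rewrite -natrM ler_nat.
have colsum := @join_lap_colsum R n d d_gt0 (leq_trans d_le (leq_addr 1 n)).
move: (n%:R : R) (d%:R : R) D_ge1 N_ge r_gt rootD colsum => N D D_ge1 N_ge r_gt rootD colsum.
have p1 : r - 2 * N + 3 * D != 0 by rewrite gt_eqF //; lra.
have p2 : r - D != 0 by rewrite gt_eqF //; lra.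
pose v := \row_(k < n) class_vec n d 1 (D / (r - 2 * N + 3 * D)) (D / (r - D)) k.
apply/eigenvalueP; exists v.
  apply/rowP => j; rewrite !mxE; under eq_bigr => i _ do rewrite mxE.
  rewrite colsum /class_vec; case: ifP => _; [|case: ifP => _]; rewrite ?mulr1; last 2 first.
  - by field.
  - by field.
  apply/eqP; rewrite -subr_eq0 (_ : _ - r =
    - quot_charpoly N D r / ((r - 2 * N + 3 * D) * (r - D))).
    by rewrite rootD oppr0 mul0r.
  by rewrite /quot_charpoly; field; rewrite p1 p2.
have n_gt0 : (0 < n)%N by lia.
apply/eqP => /rowP /(_ (Ordinal n_gt0)).
by rewrite !mxE /class_vec /= d_gt0 => /eqP; rewrite oner_eq0.
Qed.

Lemma join_lap_eigenvalue_lt (R : realType) n s (r : R) :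
  (0 < s)%N -> (2 * s <= n)%N -> 0 < quot_charpoly n%:R s%:R r ->
  0 < r - 2 * n%:R + 3 * s%:R -> 0 < r - s%:R ->
  exists2 eps, 0 < eps &
    forall a, eigenvalue (signless_lap R (join_graph n s)) a -> a <= r - eps.
Proof.
move=> s_gt0 s_le T_gt0 p1_gt0 p2_gt0.
have S_ge1 : (1 : R) <= s%:R by rewrite ler1n.
have N_ge : 2 * (s%:R : R) <= n%:R by rewrite -natrM ler_nat.
have colsum := @join_lap_colsum R n s s_gt0 (leq_trans s_le (leq_addr 1 n)).
move: (n%:R : R) (s%:R : R) S_ge1 N_ge T_gt0 p1_gt0 p2_gt0 colsum.
move=> N S S_ge1 N_ge T_gt0 p1_gt0 p2_gt0 colsum.
set T := quot_charpoly N S r in T_gt0.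
set p1 := r - 2 * N + 3 * S in p1_gt0 colsum *.
set p2 := r - S in p2_gt0 *.
have p12_gt0 : 0 < p1 * p2 by apply: mulr_gt0.
(* Raising the class weights by t costs t (N - S) on the first class, half of
   its slack T / (p1 p2). *)
pose t := T / (2 * (p1 * p2) * (N - S)).
have t_gt0 : 0 < t by rewrite divr_gt0 // !mulr_gt0 //; lra.
pose be := S / p1 + t; pose ga := S / p2 + t.
have be_gt0 : 0 < be by rewrite addr_gt0 // divr_gt0 //; lra.
have ga_gt0 : 0 < ga by rewrite addr_gt0 // divr_gt0 //; lra.
apply: (eigenvalue_le_sub_slack (@signless_lap_ge0 R n (join_graph n s))
  (w := class_vec n s 1 be ga)).
  by move=> i; rewrite /class_vec; case: ifP => _ //; case: ifP.
move=> j; rewrite colsum /class_vec; case: ifP => _; [|case: ifP => _].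
- have -> : 1 * (N + S - 2) + be * (N - 2 * S + 1) + ga * (S - 1) = r - T / (2 * (p1 * p2)).
    rewrite /be /ga /t /T /quot_charpoly -/p1 -/p2; field.
    by rewrite !gt_eqF //; lra.
  by rewrite mulr1 ltrBlDr ltrDl divr_gt0 // mulr_gt0.
- have -> : 1 * S + be * (2 * N - 3 * S) = r * be - t * p1.
    by rewrite /be /p1; field; rewrite gt_eqF.
  by rewrite ltrBlDr ltrDl mulr_gt0.
- have -> : 1 * S + ga * S = r * ga - t * p2.
    by rewrite /ga /p2; field; rewrite gt_eqF.
  by rewrite ltrBlDr ltrDl mulr_gt0.
Qed.

Theorem mainTheorem5 (R : realType) (delta n s : nat) :
  (2 <= delta)%N -> (7 * delta - 7 <= n)%N ->
  (delta + 1 <= s)%N -> (2 * s <= n)%N ->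
  rhoQ R (join_graph n s) < rhoQ R (join_graph n delta).
Proof.
move=> d_ge2 n_ge s_ge s_le.
have d_le : (2 * delta <= n)%N by lia.
have D_ge2 : (2 : R) <= delta%:R by rewrite ler_nat.
have N_ge : 7 * delta%:R - 7 <= n%:R :> R.
  have : (7 * delta <= n + 7)%N by lia.
  by rewrite -(ler_nat R) natrM natrD; lra.
have S_ge : delta%:R + 1 <= s%:R :> R by move: s_ge; rewrite -(ler_nat R) natrD.
have S_le : 2 * s%:R <= n%:R :> R by rewrite -natrM ler_nat.
have [r r_gt rootD] := @quot_charpoly_root R n%:R delta%:R (ltac:(lra)) (ltac:(lra)).
have eig_r := join_lap_eigenvalue (ltnW d_ge2) d_le r_gt rootD.
have T_gt0 := quot_charpoly_gt0 D_ge2 N_ge S_ge S_le r_gt rootD.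
have s_gt0 : (0 < s)%N by lia.
have [eps eps_gt0 eig_le] :=
  join_lap_eigenvalue_lt s_gt0 s_le T_gt0 (ltac:(lra)) (ltac:(lra)).
apply: le_lt_trans (rhoQ_le eig_le) _.
by apply: lt_le_trans (rhoQ_ge_eigenvalue eig_r); rewrite gt_max; apply/andP; split; lra.
Qed.
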